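(* Let $W_1,\dots,W_N\in\{1,-1\}$ with both values occurring, let $\mathbf{K}_\phi\in\mathbb{R}^{N\times N}$ be the matrix $[\mathbf{K}_\phi]_{ij}=W_iW_j\langle\phi(\mathbf{X}_i),\phi(\mathbf{X}_j)\rangle$ for some feature map $\phi$ into a Hilbert space, and suppose $\mathbf{K}_\phi$ has full rank. Let $\lambda\ge 0$ be such that an optimal solution of $$\min_{\boldsymbol{\alpha}}\ \boldsymbol{\alpha}^\top\mathbf{K}_\phi\boldsymbol{\alpha}-2\lambda\mathbf{1}^\top\boldsymbol{\alpha}\quad\text{s.t.}\quad \mathbf{W}^\top\boldsymbol{\alpha}=0,\ \mathbf{0}\preceq\boldsymbol{\alpha}\preceq\mathbf{1}$$ is an optimal solution of $\min_{\boldsymbol{\alpha}\in\mathcal{A}}\boldsymbol{\alpha}^\top\mathbf{K}_\phi\boldsymbol{\alpha}$, where $\mathcal{A}=\{\boldsymbol{\alpha}:\mathbf{0}\preceq\boldsymbol{\alpha}\preceq\mathbf{1},\ \sum_{i:W_i=1}\alpha_i=\sum_{i:W_i=-1}\alpha_i=1\}$. Then $\lambda>0$.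
   Context: $\preceq$ denotes entrywise inequality, $\mathbf{W}=(W_1,\dots,W_N)^\top$, $\mathbf{1}$ the all-ones vector. $W_i=1$ indicates a treated unit and $W_i=-1$ a control unit. *)

From HB Require Import structures.
From mathcomp Require Import all_boot all_order all_algebra.
From mathcomp Require Import reals.
Set Implicit Arguments. Unset Strict Implicit. Unset Printing Implicit Defensive.
Import Order.TTheory GRing.Theory Num.Theory.
Local Open Scope ring_scope.

Definition is_inner_product (R : realType) (V : lmodType R) (ip : V -> V -> R) : Prop :=
  [/\ (forall x y : V, ip x y = ip y x),
      (forall (a : R) (x y z : V), ip (a *: x + y) z = a * ip x z + ip y z)
    & (forall x : V, x != 0 -> 0 < ip x x)].

Definition Kphi (R : realType) (V : lmodType R) (ip : V -> V -> R)
  (T : Type) (phi : T -> V) (N : nat) (X : 'I_N -> T) (W : 'cV[R]_N) : 'M[R]_N :=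
  \matrix_(i, j) (W i 0 * W j 0 * ip (phi (X i)) (phi (X j))).

Definition qform (R : realType) (N : nat) (K : 'M[R]_N) (a : 'cV[R]_N) : R :=
  (a^T *m K *m a) 0 0.

Definition in_box (R : realType) (N : nat) (a : 'cV[R]_N) : Prop :=
  forall i, 0 <= a i 0 <= 1.

Definition feas1 (R : realType) (N : nat) (W : 'cV[R]_N) (a : 'cV[R]_N) : Prop :=
  (W^T *m a) 0 0 = 0 /\ in_box a.

Definition obj1 (R : realType) (N : nat) (K : 'M[R]_N) (lam : R) (a : 'cV[R]_N) : R :=
  qform K a - 2 * lam * \sum_i a i 0.

Definition opt1 (R : realType) (N : nat) (K : 'M[R]_N) (W : 'cV[R]_N) (lam : R)
  (a : 'cV[R]_N) : Prop :=
  feas1 W a /\ forall b, feas1 W b -> obj1 K lam a <= obj1 K lam b.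

Definition setA (R : realType) (N : nat) (W : 'cV[R]_N) (a : 'cV[R]_N) : Prop :=
  [/\ in_box a, \sum_(i | W i 0 == 1) a i 0 = 1 & \sum_(i | W i 0 == -1) a i 0 = 1].

Definition opt2 (R : realType) (N : nat) (K : 'M[R]_N) (W : 'cV[R]_N)
  (a : 'cV[R]_N) : Prop :=
  setA W a /\ forall b, setA W b -> qform K a <= qform K b.

(* With lam = 0 the first problem just minimises the quadratic form, so its
   optimum a satisfies a^T K a <= 0 (compare with the feasible point 0).  But
   K is the Gram matrix of the vectors W_j phi(X_j), so a^T K a = |v|^2 with
   v = sum_j a_j W_j phi(X_j); hence v = 0, K a = 0 and, K being invertible,
   a = 0.  This contradicts a in A. *)

From HB Require Import structures.
From mathcomp Require Import all_boot all_order all_algebra.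
From mathcomp Require Import reals.
From mathcomp Require Import ring.
Set Implicit Arguments. Unset Strict Implicit. Unset Printing Implicit Defensive.
Import Order.TTheory GRing.Theory Num.Theory.
Local Open Scope ring_scope.

Section LinearInFirstArgument.
Variables (R : realType) (V : lmodType R) (ip : V -> V -> R).
Hypothesis ipDl : forall (a : R) (x y z : V), ip (a *: x + y) z = a * ip x z + ip y z.

Lemma ip0l z : ip 0 z = 0.
Proof.
have := ipDl 1 0 0 z; rewrite scale1r addr0 mul1r => h.
by apply/(addrI (ip 0 z)); rewrite addr0 -h.
Qed.

Lemma ip_suml n (c : 'I_n -> R) (x : 'I_n -> V) z :
  ip (\sum_i c i *: x i) z = \sum_i c i * ip (x i) z.
Proof.
elim/big_rec2: _ => [|i y1 y2 _ <-]; first exact: ip0l.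
by rewrite ipDl.
Qed.

End LinearInFirstArgument.

Section GramMatrix.
Variables (R : realType) (V : lmodType R) (ip : V -> V -> R).
Hypothesis ip_inner : is_inner_product ip.
Variables (T : Type) (phi : T -> V) (N : nat) (X : 'I_N -> T) (W : 'cV[R]_N).

Let K := Kphi ip phi X W.

Definition Kphi_comb (a : 'cV[R]_N) : V := \sum_j (a j 0 * W j 0) *: phi (X j).

Lemma mulmx_Kphi a : K *m a = \col_i (W i 0 * ip (Kphi_comb a) (phi (X i))).
Proof.
have [ipC ipDl _] := ip_inner.
apply/matrixP => i k; rewrite !mxE (ord1 k) ip_suml // big_distrr /=.
by apply: eq_bigr => j _; rewrite !mxE ipC; ring.
Qed.

Lemma qform_Kphi a : qform K a = ip (Kphi_comb a) (Kphi_comb a).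
Proof.
have [ipC ipDl _] := ip_inner.
rewrite /qform -mulmxA mxE [RHS]ip_suml //.
by apply: eq_bigr => j _; rewrite mulmx_Kphi !mxE ipC; ring.
Qed.

Lemma qform_Kphi_gt0 a : \rank K = N -> a != 0 -> 0 < qform K a.
Proof.
have [_ ipDl ipP] := ip_inner.
move=> rkK; apply: contraR; rewrite qform_Kphi -leNgt => v_le0.
have v0 : Kphi_comb a = 0.
  by apply/eqP; apply: contraTT v_le0 => /ipP; rewrite -ltNge.
have Ka0 : K *m a = 0.
  by apply/matrixP => i k; rewrite mulmx_Kphi v0 !mxE ip0l // mulr0.
have Kunit : K \in unitmx by rewrite -row_free_unit /row_free rkK.
by rewrite -[a]mul1mx -(mulVmx Kunit) -mulmxA Ka0 mulmx0.
Qed.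

End GramMatrix.

Lemma feas1_0 (R : realType) (N : nat) (W : 'cV[R]_N) : feas1 W 0.
Proof. by split=> [|i]; rewrite ?mulmx0 mxE ?lexx ?ler01. Qed.

Lemma opt1_qform_le0 (R : realType) (N : nat) (K : 'M[R]_N) (W : 'cV[R]_N) a :
  opt1 K W 0 a -> qform K a <= 0.
Proof.
move=> [_ /(_ 0 (feas1_0 W))].
by rewrite /obj1 !mulr0 !mul0r !subr0 /qform mulmx0 [X in _ <= X -> _]mxE.
Qed.

Lemma setA_neq0 (R : realType) (N : nat) (W : 'cV[R]_N) a : setA W a -> a != 0.
Proof.
case=> _ sum1 _; apply: contraPneq sum1 => ->.
rewrite big1 => [|i _]; last by rewrite mxE.
by move/esym/eqP; rewrite oner_eq0.
Qed.

Theorem lemma1 (R : realType) (V : lmodType R) (ip : V -> V -> R)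
  (T : Type) (phi : T -> V) (N : nat) (X : 'I_N -> T) (W : 'cV[R]_N) (lam : R) :
  is_inner_product ip ->
  (forall i, W i 0 = 1 \/ W i 0 = -1) ->
  (exists i, W i 0 = 1) -> (exists j, W j 0 = -1) ->
  \rank (Kphi ip phi X W) = N ->
  0 <= lam ->
  (exists a, opt1 (Kphi ip phi X W) W lam a /\ opt2 (Kphi ip phi X W) W a) ->
  0 < lam.
Proof.
move=> ip_inner _ _ _ rkK lam_ge0 [a [opt1a [Aa _]]].
rewrite lt_def lam_ge0 andbT; apply: contraPneq opt1a => -> opt1a.
have := qform_Kphi_gt0 ip_inner rkK (setA_neq0 Aa).
by rewrite ltNge (opt1_qform_le0 opt1a).
Qed.
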